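(* Let $X$ be a topological space, $\alpha : X\to X$ a homeomorphism, $\mathcal{F}$ a Banach function space on $X$ satisfying condition $\Omega_\alpha$, and $w$ a positive measurable function on $X$ such that $w$ and $w^{-1}$ are bounded. Let $T = T_{\alpha,w}$, $S = T^{-1}$ and $C^{(n)} = \frac12(T^n + S^n)$ for $n\in\mathbb{N}$. Suppose that for each compact subset $K$ of $X$ there exist a strictly increasing sequence of natural numbers $(n_k)_k$ and sequences of Borel subsets $(E_k)_k$, $(F_k)_k$, $(D_k)_k$ of $K$ with $E_k = D_k\cup F_k$ and $D_k \cap F_k = \emptyset$ for all $k$, such that each of the following seven quantities tends to $0$ as $k\to\infty$: (i) $\|\chi_{K\setminus E_k}\|_{\mathcal{F}}$; (ii) $\sup_{x\in D_k} \prod_{j=1}^{2n_k} (w\circ\alpha^{-j})(x)$; (iii) $\sup_{x\in F_k} \prod_{j=0}^{2n_k-1} (w\circ\alpha^{j})^{-1}(x)$; (iv) $\left(\sup_{x\in E_k} \prod_{j=1}^{n_k} (w\circ\alpha^{-j})(x)\right)\cdot\left(\sup_{x\in D_k} \prod_{j=1}^{n_k} (w\circ\alpha^{-j})(x)\right)$; (v) $\left(\sup_{x\in E_k} \prod_{j=1}^{n_k} (w\circ\alpha^{-j})(x)\right)\cdot\left(\sup_{x\in F_k} \prod_{j=0}^{n_k-1} (w\circ\alpha^{j})^{-1}(x)\right)$; (vi) $\left(\sup_{x\in E_k} \prod_{j=0}^{n_k-1} (w\circ\alpha^{j})^{-1}(x)\right)\cdot\left(\sup_{x\in D_k} \prod_{j=1}^{n_k}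 (w\circ\alpha^{-j})(x)\right)$; (vii) $\left(\sup_{x\in E_k} \prod_{j=0}^{n_k-1} (w\circ\alpha^{j})^{-1}(x)\right)\cdot\left(\sup_{x\in F_k} \prod_{j=0}^{n_k-1} (w\circ\alpha^{j})^{-1}(x)\right)$. Then the sequence $(C^{(n)})_{n}$ is topologically transitive for positive supercyclicity.
   Context: $\mathcal{M}_0(X)$ is the set of Borel measurable complex-valued functions on $X$; $\chi_A$ is the characteristic function of a Borel set $A$. A Banach function space on $X$ is a linear subspace $\mathcal{F}\subseteq\mathcal{M}_0(X)$ which is a Banach space under a given norm $\|\cdot\|_{\mathcal F}$. $\mathcal{F}$ is $\alpha$-invariant if for each $f\in\mathcal F$, $f\circ\alpha^{\pm1}\in\mathcal F$ and $\|f\circ\alpha^{\pm1}\|_{\mathcal F} = \|f\|_{\mathcal F}$. $\mathcal F$ is solid if whenever $f\in\mathcal F$, $g\in\mathcal M_0(X)$ and $|g|\le|f|$, then $g\in\mathcal F$ and $\|g\|_{\mathcal F}\le\|f\|_{\mathcal F}$. $\mathcal F$ satisfies condition $\Omega_\alpha$ if: (1) $\mathcal F$ is solid and $\alpha$-invariant; (2) $\chi_E\in\mathcal F$ for every compact $E\subseteq X$; (3) the set $\mathcal F_{bc}$ of bounded compactly supported functions in $\mathcal F$ is dense in $\mathcal F$. $w^{-1} := 1/w$. The weighted composition operator is $T_{\alpha,w}(f) = w\cdot(f\circ\alpha)$, a bounded invertible operator on $\mathcal F$ with inverse $S_{\alpha,w}$; one has $T^n f = \prod_{j=0}^{n-1}(w\circ\alpha^j)\cdot(f\circ\alpha^n)$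 and $S^nf = \prod_{j=1}^{n}(w\circ\alpha^{-j})^{-1}\cdot(f\circ\alpha^{-n})$. The sequence $(C^{(n)})_n$ is topologically transitive for positive supercyclicity if for all non-empty open subsets $O_1,O_2$ of $\mathcal F$ there exist $n\in\mathbb N$ and $\lambda\in\mathbb R^+$ with $\lambda C^{(n)}(O_1)\cap O_2\neq\emptyset$. The supremum over the empty set is taken to be $0$. *)

From HB Require Import structures.
From mathcomp Require Import all_boot all_order all_algebra.
From mathcomp Require Import all_classical all_reals all_analysis.
From mathcomp Require Import complex.
Import Order.TTheory GRing.Theory Num.Theory.
Import numFieldTopology.Exports numFieldNormedType.Exports.

Set Implicit Arguments.
Unset Strict Implicit.
Unset Printing Implicit Defensive.

Local Open Scope ring_scope.
Local Open Scope classical_set_scope.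

Section BanachFunctionSpaces.
Variables (R : realType) (X : topologicalType).

Definition cabs (z : R[i]) : R := Normc.normc z.

Definition borel {T : topologicalType} (A : set T) : Prop := <<s (@open T) >> A.

Definition borel_fun {T : topologicalType} (g : T -> R) : Prop :=
  forall B : set R, @borel R B -> borel (g @^-1` B).

Definition M0 (f : X -> R[i]) : Prop :=
  borel_fun (fun x => @complex.Re R (f x)) /\ borel_fun (fun x => @complex.Im R (f x)).

Definition chi (A : set X) : X -> R[i] := fun x => ((\1_A x : R)%:C)%C.

Definition fsub (f g : X -> R[i]) : X -> R[i] := fun x => f x - g x.

Record BanachFunctionSpace (F : set (X -> R[i])) (nF : (X -> R[i]) -> R)
  : Prop := {
  bfs_M0 : forall f, F f -> M0 f;
  bfs_zero : F (fun _ => 0);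
  bfs_add : forall f g, F f -> F g -> F (fun x => f x + g x);
  bfs_scale : forall (c : R[i]) f, F f -> F (fun x => c * f x);
  bfs_norm_ge0 : forall f, F f -> 0 <= nF f;
  bfs_norm_eq0 : forall f, F f -> nF f = 0 -> f = (fun _ => 0);
  bfs_norm_triangle : forall f g, F f -> F g ->
      nF (fun x => f x + g x) <= nF f + nF g;
  bfs_norm_scale : forall (c : R[i]) f, F f ->
      nF (fun x => c * f x) = cabs c * nF f;
  bfs_complete : forall u : nat -> X -> R[i], (forall n, F (u n)) ->
      (forall e : R, 0 < e -> exists N, forall m n, (N <= m)%N -> (N <= n)%N ->
          nF (fsub (u m) (u n)) < e) ->
      exists f, F f /\ (forall e : R, 0 < e -> exists N, forall n, (N <= n)%N ->
          nF (fsub (u n) f) < e) }.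

Definition solid (F : set (X -> R[i])) (nF : (X -> R[i]) -> R) : Prop :=
  forall f g, F f -> M0 g -> (forall x, cabs (g x) <= cabs (f x)) ->
    F g /\ nF g <= nF f.

(* alpha-invariance; alphainv is the inverse of alpha *)
Definition invariant (F : set (X -> R[i])) (nF : (X -> R[i]) -> R)
  (alpha alphainv : X -> X) : Prop :=
  forall f, F f ->
    [/\ F (f \o alpha), F (f \o alphainv),
        nF (f \o alpha) = nF f & nF (f \o alphainv) = nF f].

Definition bounded_fun (g : X -> R[i]) : Prop :=
  exists M : R, forall x, cabs (g x) <= M.

Definition compactly_supported (g : X -> R[i]) : Prop :=
  compact (closure [set x | g x != 0]).

Record condition_Omega (F : set (X -> R[i])) (nF : (X -> R[i]) -> R)
  (alpha alphainv : X -> X) : Prop := {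
  om_solid : solid F nF;
  om_invariant : invariant F nF alpha alphainv;
  om_chi_compact : forall E : set X, compact E -> F (chi E);
  om_dense : forall f, F f -> forall e : R, 0 < e ->
      exists g, [/\ F g, bounded_fun g, compactly_supported g &
                    nF (fsub f g) < e] }.

Definition homeomorphism (alpha alphainv : X -> X) : Prop :=
  [/\ continuous alpha, continuous alphainv,
      cancel alpha alphainv & cancel alphainv alpha].

Definition Top (alpha : X -> X) (w : X -> R) (f : X -> R[i]) : X -> R[i] :=
  fun x => ((w x)%:C)%C * f (alpha x).
Definition Sop (alphainv : X -> X) (w : X -> R) (f : X -> R[i]) : X -> R[i] :=
  fun x => (((w (alphainv x))^-1)%:C)%C * f (alphainv x).

Definition Cn (alpha alphainv : X -> X) (w : X -> R) (n : nat)
  (f : X -> R[i]) : X -> R[i] :=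
  fun x => 2^-1 * (iter n (Top alpha w) f x + iter n (Sop alphainv w) f x).

(* sup over A of g; sup of the empty set is 0 (library convention, sup0) *)
Definition supr (A : set X) (g : X -> R) : R := sup [set g x | x in A].

Definition back_prod (alphainv : X -> X) (w : X -> R) (m : nat) (x : X) : R :=
  \prod_(1 <= j < m.+1) w (iter j alphainv x).
Definition fwd_inv_prod (alpha : X -> X) (w : X -> R) (m : nat) (x : X) : R :=
  \prod_(0 <= j < m) (w (iter j alpha x))^-1.

Definition openF (F : set (X -> R[i])) (nF : (X -> R[i]) -> R)
  (O : set (X -> R[i])) : Prop :=
  O `<=` F /\ forall f, O f -> exists2 e : R, 0 < e &
    forall g, F g -> nF (fsub g f) < e -> O g.

Definition transitive_positive_supercyclic (F : set (X -> R[i]))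
  (nF : (X -> R[i]) -> R) (Cs : nat -> (X -> R[i]) -> X -> R[i]) : Prop :=
  forall O1 O2, openF F nF O1 -> openF F nF O2 ->
    O1 !=set0 -> O2 !=set0 ->
    exists n (lam : R), [/\ (0 < n)%N, 0 < lam &
      exists f, O1 f /\ O2 (fun x => ((lam%:C)%C * Cs n f x))].

End BanachFunctionSpaces.
Arguments chi {R X}.

From Pilot Require Import Defs.
From HB Require Import structures.
From mathcomp Require Import all_boot all_order all_algebra.
From mathcomp Require Import all_classical all_reals all_analysis.
From mathcomp Require Import complex measurable_realfun.
From mathcomp Require Import ring lra.
Import Order.TTheory GRing.Theory Num.Theory.
Import numFieldTopology.Exports numFieldNormedType.Exports.
Local Open Scope ring_scope.
Local Open Scope classical_set_scope.
Set Implicit Arguments.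
Unset Strict Implicit.

(* Given nonempty open sets O1, O2, pick bounded compactly supported f in O1
   and g in O2, and let K be the union of their supports.  For n = n_k and the
   sets E = E_k, D = D_k, G = F_k of the hypothesis put
     u = f chi_E + (2/lam) (T^n (g chi_D) + S^n (g chi_G)).
   Since T^n S^n = S^n T^n = id and chi_D + chi_G = chi_E,
     lam C^(n) u = (lam/2) (T^n + S^n) (f chi_E) + T^2n (g chi_D) + S^2n (g chi_G) + g chi_E.
   Pointwise |T^m (h chi_A)| <= (sup_A prod_{j=1}^m w o alpha^-j) |h|_oo chi_K o alpha^m
   (and similarly for S^m), so solidity and alpha-invariance bound the norm of
   every term by a supremum times |chi_K|.  Thus |u - f| is small up to
   (2/lam) B and |lam C^(n) u - g| up to (lam/2) A, where A and B are the sums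
   of the n-fold suprema over E, resp. over D and G; by (iv)-(vii) A B -> 0,
   so lam can be chosen to make both (lam/2) A and (2/lam) B small. *)

Lemma measurableR_borel (R : realType) : (@measurable _ R : set (set R)) = @borel R.
Proof.
rewrite eqEsubset; split.
  rewrite [X in X `<=` _](_ : _ = (@ocitv R).-sigma.-measurable) //.
  rewrite RGenOpens.measurableE.
  apply: smallest_sub; first exact: smallest_sigma_algebra.
  move=> A [x [y ->]]; apply: sub_sigma_algebra; exact: interval_open.
apply: smallest_sub; first exact: sigma_algebra_measurable.
exact: open_measurable.
Qed.

Lemma measurable_funV_gt0 d (T : measurableType d) (R : realType) (f : T -> R) :
  (forall x, 0 < f x) -> measurable_fun setT f -> measurable_fun setT (fun x => (f x)^-1).
Proof.
move=> fpos mf.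
have ltVswap (a b : R) : 0 < a -> 0 < b -> (a < b^-1) = (b < a^-1).
  by move=> a0 b0; rewrite -[a in LHS]invrK ltf_pV2 // posrE invr_gt0.
apply: (measurability _ (RGenOInfty.measurableE R)) => //.
move=> _ [_ [a ->] <-].
have [a0|a0] := ltP 0 a.
  rewrite [X in measurable X](_ : _ = setT `&` f @^-1` `]-oo, a^-1[).
    by apply: mf => //; exact: measurable_itv.
  apply/seteqP; split => x /=; rewrite !in_itv /= !andbT => -[_ h]; split => //.
    by rewrite -ltVswap.
  by rewrite ltVswap.
rewrite [X in measurable X](_ : _ = setT); first exact: measurableT.
apply/seteqP; split => x //= _; split => //=; rewrite in_itv /= andbT.
by apply: le_lt_trans a0 _; rewrite invr_gt0.
Qed.

Lemma continuous_iter (X : topologicalType) (h : X -> X) n :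
  continuous h -> continuous (iter n h).
Proof.
move=> ch; elim: n => [|n IH] x /=; first exact: cvg_id.
exact: (continuous_comp (IH x) (ch _)).
Qed.

(* The Borel sets of [X] as a measurable type; building it needs a point of [X]. *)
Section BorelSpace.
Variables (X : topologicalType) (x0 : X).

Definition pointed_space : Type := X.
HB.instance Definition _ := Choice.on pointed_space.
HB.instance Definition _ := isPointed.Build pointed_space x0.
Definition borel_space := g_sigma_algebraType (@open X : set (set pointed_space)).

Lemma borel_spaceE (A : set X) : measurable (A : set borel_space) = borel A.
Proof. by []. Qed.

Lemma borel_funP (R : realType) (f : X -> R) :
  borel_fun f <-> measurable_fun [set: borel_space] (f : borel_space -> R).
Proof.
split=> [bf _ B mB|mf B bB]; first by rewrite setTI; apply: bf; rewrite -measurableR_borel.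
by have := mf measurableT B; rewrite setTI measurableR_borel; apply.
Qed.

Lemma continuous_measurable_fun (h : X -> X) :
  continuous h -> measurable_fun [set: borel_space] (h : borel_space -> borel_space).
Proof.
move=> ch; apply: (@measurability _ _ borel_space borel_space setT h (@open X)) => //.
move=> _ [B oB <-]; rewrite setTI; apply: sub_sigma_algebra.
by move: oB; apply: open_comp => x _; exact: ch.
Qed.

End BorelSpace.

Section Borel.
Variables (R : realType) (X : topologicalType).

Lemma borel_inhabited (A : set X) : ((exists x : X, True) -> borel A) -> borel A.
Proof.
have [inhX|noX] := pselect (exists x : X, True) => bA; first exact: bA.
have -> : A = set0 by apply/seteqP; split => x // _; apply: noX; exists x.
by apply: sub_sigma_algebra; exact: open0.
Qed.

Lemma borel_closed (A : set X) : closed A -> borel A.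
Proof.
move=> cA; apply: borel_inhabited => -[x0 _].
rewrite -(borel_spaceE x0) -[A]setCK; apply: measurableC.
by rewrite borel_spaceE; apply: sub_sigma_algebra; exact: closed_openC.
Qed.

Lemma borelD (A B : set X) : borel A -> borel B -> borel (A `\` B).
Proof.
move=> bA bB; apply: borel_inhabited => -[x0 _].
by move: bA bB; rewrite -!(borel_spaceE x0); exact: measurableD.
Qed.

Lemma borel_fun_inhabited (f : X -> R) :
  ((exists x : X, True) -> borel_fun f) -> borel_fun f.
Proof. by move=> bf B bB; apply: borel_inhabited => inhX; exact: bf. Qed.

Lemma borel_fun_cst (c : R) : borel_fun (fun _ : X => c).
Proof.
by apply: borel_fun_inhabited => -[x0 _]; rewrite (borel_funP x0); exact: measurable_cst.
Qed.

Lemma borel_funD (f g : X -> R) :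
  borel_fun f -> borel_fun g -> borel_fun (fun x => f x + g x).
Proof.
move=> bf bg; apply: borel_fun_inhabited => -[x0 _].
by move: bf bg; rewrite !(borel_funP x0); exact: measurable_funD.
Qed.

Lemma borel_funB (f g : X -> R) :
  borel_fun f -> borel_fun g -> borel_fun (fun x => f x - g x).
Proof.
move=> bf bg; apply: borel_fun_inhabited => -[x0 _].
by move: bf bg; rewrite !(borel_funP x0); exact: measurable_funB.
Qed.

Lemma borel_funM (f g : X -> R) :
  borel_fun f -> borel_fun g -> borel_fun (fun x => f x * g x).
Proof.
move=> bf bg; apply: borel_fun_inhabited => -[x0 _].
by move: bf bg; rewrite !(borel_funP x0); exact: measurable_funM.
Qed.

Lemma borel_funV (f : X -> R) :
  (forall x, 0 < f x) -> borel_fun f -> borel_fun (fun x => (f x)^-1).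
Proof.
move=> fpos bf; apply: borel_fun_inhabited => -[x0 _].
by move: bf; rewrite !(borel_funP x0); exact: measurable_funV_gt0.
Qed.

Lemma borel_fun_indic (A : set X) : borel A -> borel_fun (fun x => \1_A x : R).
Proof.
move=> bA; apply: borel_fun_inhabited => -[x0 _].
by move: bA; rewrite (borel_funP x0) -(borel_spaceE x0); exact: measurable_indic.
Qed.

Lemma borel_fun_comp (f : X -> R) (h : X -> X) :
  continuous h -> borel_fun f -> borel_fun (fun x => f (h x)).
Proof.
move=> ch bf; apply: borel_fun_inhabited => -[x0 _].
move: bf; rewrite !(borel_funP x0) => mf.
exact: measurableT_comp mf (@continuous_measurable_fun X x0 h ch).
Qed.

Lemma borel_fun_prod (I : eqType) (s : seq I) (h : I -> X -> R) :
  (forall i, borel_fun (h i)) -> borel_fun (fun x => \prod_(i <- s) h i x).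
Proof.
move=> bh; apply: borel_fun_inhabited => -[x0 _].
rewrite (borel_funP x0); apply: measurable_prod => i _.
by rewrite -(borel_funP x0).
Qed.

End Borel.

Section ComplexNumbers.
Variable R : realType.
Implicit Types (z u : R[i]) (r : R).
Local Notation Re := (@complex.Re R).
Local Notation Im := (@complex.Im R).

Lemma cabs_ge0 z : 0 <= cabs z.
Proof. by case: z => a b; exact: sqrtr_ge0. Qed.

Lemma cabsM z u : cabs (z * u) = cabs z * cabs u.
Proof. exact: Normc.normcM. Qed.

Lemma cabsV z : cabs z^-1 = (cabs z)^-1.
Proof. exact: Normc.normcV. Qed.

Lemma cabsN z : cabs (- z) = cabs z.
Proof. exact: (@normcN R z). Qed.

Lemma cabs0 : cabs (0 : R[i]) = 0.
Proof. exact: Normc.normc0. Qed.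

Lemma cabs1 : cabs (1 : R[i]) = 1.
Proof. exact: Normc.normc1. Qed.

Lemma cabs_real r : cabs (r%:C)%C = `|r|.
Proof. by rewrite /cabs /= expr0n /= addr0 sqrtr_sqr. Qed.

Lemma cabs2 : cabs (2 : R[i]) = 2.
Proof. by rewrite /cabs /= addr0 expr0n /= addr0 sqrtr_sqr ger0_norm. Qed.

Lemma cabs_chi (X : topologicalType) (A : set X) x : cabs (chi (R:=R) A x) = \1_A x.
Proof. by rewrite /chi cabs_real ger0_norm. Qed.

Lemma ReD z u : Re (z + u) = Re z + Re u.
Proof. by case: z u => [a b] [c d]. Qed.

Lemma ImD z u : Im (z + u) = Im z + Im u.
Proof. by case: z u => [a b] [c d]. Qed.

Lemma ReM z u : Re (z * u) = Re z * Re u - Im z * Im u.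
Proof. by case: z u => [a b] [c d]. Qed.

Lemma ImM z u : Im (z * u) = Re z * Im u + Im z * Re u.
Proof. by case: z u => [a b] [c d]. Qed.

End ComplexNumbers.

Section MeasurableComplexFunctions.
Variables (R : realType) (X : topologicalType).
Implicit Types (a b : X -> R[i]).
Local Notation Re := (@complex.Re R).
Local Notation Im := (@complex.Im R).

Lemma M0_cst (c : R[i]) : M0 (fun _ : X => c).
Proof. by split; exact: borel_fun_cst. Qed.

Lemma M0_add a b : M0 a -> M0 b -> M0 (fun x => a x + b x).
Proof.
move=> [ra ia] [rb ib]; split.
  by under eq_fun do rewrite ReD; exact: borel_funD.
by under eq_fun do rewrite ImD; exact: borel_funD.
Qed.

Lemma M0_mul a b : M0 a -> M0 b -> M0 (fun x => a x * b x).
Proof.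
move=> [ra ia] [rb ib]; split.
  by under eq_fun do rewrite ReM; apply: borel_funB; exact: borel_funM.
by under eq_fun do rewrite ImM; apply: borel_funD; exact: borel_funM.
Qed.

Lemma M0_sub a b : M0 a -> M0 b -> M0 (fun x => a x - b x).
Proof.
move=> Ma Mb; rewrite (_ : (fun x => _) = fun x => a x + (-1) * b x).
  by apply: M0_add => //; exact: M0_mul (M0_cst (-1)) Mb.
by apply/funext => x; rewrite mulN1r.
Qed.

Lemma M0_real (r : X -> R) : borel_fun r -> M0 (fun x => (r x)%:C%C).
Proof. by move=> br; split => //=; exact: borel_fun_cst. Qed.

Lemma M0_chi (A : set X) : borel A -> M0 (chi (R:=R) A).
Proof. by move=> bA; apply: M0_real; exact: borel_fun_indic. Qed.

Lemma M0_comp a (h : X -> X) : continuous h -> M0 a -> M0 (fun x => a (h x)).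
Proof.
move=> ch [ra ia]; split.
  exact: (@borel_fun_comp R X (fun x => Re (a x)) h ch ra).
exact: (@borel_fun_comp R X (fun x => Im (a x)) h ch ia).
Qed.

End MeasurableComplexFunctions.

Section WeightedComposition.
Variables (R : realType) (X : topologicalType) (alpha alphainv : X -> X) (w : X -> R).
Hypotheses (aK : cancel alpha alphainv) (aiK : cancel alphainv alpha).
Hypothesis wpos : forall x, 0 < w x.
Implicit Types (h a b : X -> R[i]).

Local Notation T := (Top alpha w).
Local Notation S := (Sop alphainv w).
Local Notation bp := (back_prod alphainv w).
Local Notation fp := (fwd_inv_prod alpha w).

Lemma back_prodS n y : bp n.+1 y = w (alphainv y) * bp n (alphainv y).
Proof.
rewrite /back_prod big_nat_recl //; congr (_ * _).
by apply: eq_bigr => j _; rewrite iterSr.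
Qed.

Lemma fwd_inv_prodS n y : fp n.+1 y = (w y)^-1 * fp n (alpha y).
Proof.
rewrite /fwd_inv_prod big_nat_recl //; congr (_ * _).
by apply: eq_bigr => j _; rewrite iterSr.
Qed.

Lemma back_prod_ge0 n y : 0 <= bp n y.
Proof. by apply: prodr_ge0 => j _; exact: ltW. Qed.

Lemma fwd_inv_prod_ge0 n y : 0 <= fp n y.
Proof. by apply: prodr_ge0 => j _; rewrite invr_ge0; exact: ltW. Qed.

Lemma back_prod_bounded n :
  (exists M, forall x, w x <= M) -> exists B, forall y, bp n y <= B.
Proof.
move=> [M wM]; exists (\prod_(1 <= j < n.+1) M) => y.
by apply: ler_prod => j _; rewrite (ltW (wpos _)) wM.
Qed.

Lemma fwd_inv_prod_bounded n :
  (exists M, forall x, (w x)^-1 <= M) -> exists B, forall y, fp n y <= B.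
Proof.
move=> [M wM]; exists (\prod_(0 <= j < n) M) => y.
by apply: ler_prod => j _; rewrite invr_ge0 (ltW (wpos _)) wM.
Qed.

Lemma iter_Top n h x :
  iter n T h x = ((bp n (iter n alpha x))%:C)%C * h (iter n alpha x).
Proof.
elim: n h x => [|n IH] h x; first by rewrite /back_prod big_geq //= mul1r.
rewrite iterSr IH /Top back_prodS iterS aK mulrA -rmorphM /=.
by rewrite [X in (X%:C)%C]mulrC.
Qed.

Lemma iter_Sop n h x :
  iter n S h x = ((fp n (iter n alphainv x))%:C)%C * h (iter n alphainv x).
Proof.
elim: n h x => [|n IH] h x; first by rewrite /fwd_inv_prod big_geq //= mul1r.
rewrite iterSr IH /Sop fwd_inv_prodS iterS aiK mulrA -rmorphM /=.
by rewrite [X in (X%:C)%C]mulrC.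
Qed.

Lemma SopK : cancel S T.
Proof.
move=> h; apply/funext => x; rewrite /Top /Sop aK mulrA -rmorphM /= divff ?mul1r //.
exact: lt0r_neq0.
Qed.

Lemma TopK : cancel T S.
Proof.
move=> h; apply/funext => x; rewrite /Top /Sop aiK mulrA -rmorphM /= mulVf ?mul1r //.
exact: lt0r_neq0.
Qed.

Lemma iter_SopK n : cancel (iter n S) (iter n T).
Proof. by elim: n => [|n IH] h //; rewrite iterSr iterS SopK IH. Qed.

Lemma iter_TopK n : cancel (iter n T) (iter n S).
Proof. by elim: n => [|n IH] h //; rewrite iterSr iterS TopK IH. Qed.

Lemma iter_TopD n a b :
  iter n T (fun x => a x + b x) = fun x => iter n T a x + iter n T b x.
Proof. by apply/funext => x; rewrite !iter_Top mulrDr. Qed.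

Lemma iter_SopD n a b :
  iter n S (fun x => a x + b x) = fun x => iter n S a x + iter n S b x.
Proof. by apply/funext => x; rewrite !iter_Sop mulrDr. Qed.

Lemma iter_TopZ n (c : R[i]) a :
  iter n T (fun x => c * a x) = fun x => c * iter n T a x.
Proof. by apply/funext => x; rewrite !iter_Top mulrCA. Qed.

Lemma iter_SopZ n (c : R[i]) a :
  iter n S (fun x => c * a x) = fun x => c * iter n S a x.
Proof. by apply/funext => x; rewrite !iter_Sop mulrCA. Qed.

Hypotheses (ca : continuous alpha) (cai : continuous alphainv) (bw : borel_fun w).

Lemma borel_fun_back_prod n : borel_fun (bp n).
Proof.
apply: borel_fun_prod => j.
exact: borel_fun_comp (continuous_iter cai) bw.
Qed.

Lemma borel_fun_fwd_inv_prod n : borel_fun (fp n).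
Proof.
apply: borel_fun_prod => j; apply: borel_funV => [x|]; first exact: wpos.
exact: borel_fun_comp (continuous_iter ca) bw.
Qed.

Lemma M0_iter_Top n h : M0 h -> M0 (iter n T h).
Proof.
move=> Mh; have -> : iter n T h =
    fun x => ((bp n (iter n alpha x))%:C)%C * h (iter n alpha x).
  by apply/funext => x; rewrite iter_Top.
apply: M0_mul; last exact: M0_comp (continuous_iter ca) Mh.
apply: M0_real; exact: borel_fun_comp (continuous_iter ca) (borel_fun_back_prod n).
Qed.

Lemma M0_iter_Sop n h : M0 h -> M0 (iter n S h).
Proof.
move=> Mh; have -> : iter n S h =
    fun x => ((fp n (iter n alphainv x))%:C)%C * h (iter n alphainv x).
  by apply/funext => x; rewrite iter_Sop.
apply: M0_mul; last exact: M0_comp (continuous_iter cai) Mh.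
apply: M0_real; exact: borel_fun_comp (continuous_iter cai) (borel_fun_fwd_inv_prod n).
Qed.

End WeightedComposition.

Section Suprema.
Variables (R : realType) (X : topologicalType).
Implicit Types (A : set X) (p : X -> R).

Lemma supr_ub A p y : (exists B, forall y, p y <= B) -> A y -> p y <= supr A p.
Proof.
move=> [B pB] Ay; apply: ub_le_sup; last by exists y.
by exists B => _ [z _ <-].
Qed.

Lemma supr_ge0 A p : (exists B, forall y, p y <= B) -> (forall y, 0 <= p y) -> 0 <= supr A p.
Proof.
move=> pB p0; have [[y Ay]|noA] := pselect (A !=set0).
  exact: le_trans (p0 y) (supr_ub pB Ay).
have -> : A = set0 by apply/seteqP; split => x // Ax; apply: noA; exists x.
by rewrite /supr image_set0 sup0.
Qed.

End Suprema.

Section ProductSuprema.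
Variables (R : realType) (X : topologicalType) (alpha alphainv : X -> X) (w : X -> R).
Hypothesis wpos : forall x, 0 < w x.
Hypotheses (wM : exists M, forall x, w x <= M) (wiM : exists M, forall x, (w x)^-1 <= M).
Implicit Types (A : set X).

Lemma back_prod_le_supr n A y :
  A y -> back_prod alphainv w n y <= supr A (back_prod alphainv w n).
Proof. exact: supr_ub (back_prod_bounded alphainv wpos n wM). Qed.

Lemma fwd_inv_prod_le_supr n A y :
  A y -> fwd_inv_prod alpha w n y <= supr A (fwd_inv_prod alpha w n).
Proof. exact: supr_ub (fwd_inv_prod_bounded alpha wpos n wiM). Qed.

Lemma supr_back_prod_ge0 n A : 0 <= supr A (back_prod alphainv w n).
Proof.
exact: supr_ge0 (back_prod_bounded alphainv wpos n wM) (back_prod_ge0 alphainv wpos n).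
Qed.

Lemma supr_fwd_inv_prod_ge0 n A : 0 <= supr A (fwd_inv_prod alpha w n).
Proof.
exact: supr_ge0 (fwd_inv_prod_bounded alpha wpos n wiM) (fwd_inv_prod_ge0 alpha wpos n).
Qed.

End ProductSuprema.

Section FunctionSpace.
Variables (R : realType) (X : topologicalType) (alpha alphainv : X -> X).
Variables (F : set (X -> R[i])) (nF : (X -> R[i]) -> R).
Hypothesis BF : BanachFunctionSpace F nF.
Implicit Types (a b c : X -> R[i]).

Lemma F_fsub a b : F a -> F b -> F (fsub a b).
Proof.
move=> Fa Fb; rewrite (_ : fsub a b = fun x => a x + (-1) * b x).
  by apply: (bfs_add BF) => //; exact: (bfs_scale BF).
by apply/funext => x; rewrite mulN1r.
Qed.

Lemma F_from_fsub a b : F b -> F (fsub a b) -> F a.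
Proof.
move=> Fb Fab; rewrite (_ : a = fun x => (a x - b x) + b x); first exact: (bfs_add BF).
by apply/funext => x; rewrite subrK.
Qed.

Lemma normF_fsubC a b : F a -> F b -> nF (fsub a b) = nF (fsub b a).
Proof.
move=> Fa Fb; rewrite (_ : fsub b a = fun x => (-1) * fsub a b x).
  by rewrite (bfs_norm_scale BF _ (F_fsub Fa Fb)) cabsN cabs1 mul1r.
by apply/funext => x; rewrite /fsub mulN1r opprB.
Qed.

Lemma normF_fsub_triangle a b c : F a -> F b -> F c ->
  nF (fsub a c) <= nF (fsub a b) + nF (fsub b c).
Proof.
move=> Fa Fb Fc; rewrite (_ : fsub a c = fun x => fsub a b x + fsub b c x).
  exact: (bfs_norm_triangle BF (F_fsub Fa Fb) (F_fsub Fb Fc)).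
by apply/funext => x; rewrite /fsub addrA subrK.
Qed.

Lemma F_add_le a b (r s : R) : F a /\ nF a <= r -> F b /\ nF b <= s ->
  F (fun x => a x + b x) /\ nF (fun x => a x + b x) <= r + s.
Proof.
move=> [Fa na] [Fb nb]; split; first exact: (bfs_add BF).
exact: le_trans (bfs_norm_triangle BF Fa Fb) (lerD na nb).
Qed.

Lemma F_scale_le (z : R[i]) a (r : R) : F a /\ nF a <= r ->
  F (fun x => z * a x) /\ nF (fun x => z * a x) <= cabs z * r.
Proof.
move=> [Fa na]; split; first exact: (bfs_scale BF).
by rewrite (bfs_norm_scale BF _ Fa) ler_wpM2l // cabs_ge0.
Qed.

Hypothesis OM : condition_Omega F nF alpha alphainv.

Lemma openF_approx O : openF F nF O -> O !=set0 ->
  exists f (e : R), [/\ F f, Defs.bounded_fun f, compactly_supported f, 0 < e &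
    forall u, F u -> nF (fsub u f) < e -> O u].
Proof.
move=> [OF Oopen] [f0 Of0]; have Ff0 := OF f0 Of0.
have [e e0 eO] := Oopen f0 Of0.
have e20 : 0 < e / 2 by rewrite divr_gt0.
have [f [Ff fbd fcs nf]] := om_dense OM Ff0 e20.
exists f, (e / 2); split => // u Fu nuf; apply: eO => //.
apply: le_lt_trans (normF_fsub_triangle Fu Ff Ff0) _.
by rewrite (normF_fsubC Ff Ff0) [e in _ < e]splitr ltrD.
Qed.

Lemma solid_le (t k : X -> R[i]) (r : R) : F k -> M0 t -> 0 <= r ->
  (forall x, cabs (t x) <= r * cabs (k x)) -> F t /\ nF t <= r * nF k.
Proof.
move=> Fk Mt r0 tk.
have Frk : F (fun x => (r%:C)%C * k x) := bfs_scale BF _ Fk.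
have := om_solid OM Frk Mt; rewrite (bfs_norm_scale BF _ Fk) cabs_real ger0_norm //.
by apply => x; rewrite cabsM cabs_real ger0_norm.
Qed.

Lemma F_chi_sub (A K : set X) : F (chi K) -> borel A -> A `<=` K -> F (chi A).
Proof.
move=> FK bA AK; apply: (proj1 (solid_le FK (M0_chi R bA) ler01 _)) => x.
rewrite mul1r !cabs_chi !indicE.
have [Ax|nAx] := pselect (A x); first by rewrite !mem_set //; exact: AK.
by rewrite memNset.
Qed.

Lemma iterated_invariance (a : X -> X) :
  (forall h, F h -> F (h \o a) /\ nF (h \o a) = nF h) ->
  forall n h, F h -> F (h \o iter n a) /\ nF (h \o iter n a) = nF h.
Proof.
move=> inv n h Fh; elim: n => [|n [IH1 IH2]] //.
rewrite (_ : h \o iter n.+1 a = (h \o iter n a) \o a).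
  by have [? ->] := inv _ IH1.
by apply/funext => x /=; rewrite -iterS iterSr.
Qed.

Lemma iter_alpha_invariance n h : F h ->
  F (h \o iter n alpha) /\ nF (h \o iter n alpha) = nF h.
Proof. by apply: iterated_invariance => g Fg; have [] := om_invariant OM Fg. Qed.

Lemma iter_alphainv_invariance n h : F h ->
  F (h \o iter n alphainv) /\ nF (h \o iter n alphainv) = nF h.
Proof. by apply: iterated_invariance => g Fg; have [] := om_invariant OM Fg. Qed.

End FunctionSpace.

Section Perturbation.
Variables (R : realType) (X : topologicalType) (alpha alphainv : X -> X) (w : X -> R).
Variables (F : set (X -> R[i])) (nF : (X -> R[i]) -> R).
Hypotheses (BF : BanachFunctionSpace F nF) (OM : condition_Omega F nF alpha alphainv).
Hypotheses (ca : continuous alpha) (cai : continuous alphainv).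
Hypotheses (aK : cancel alpha alphainv) (aiK : cancel alphainv alpha).
Hypotheses (wpos : forall x, 0 < w x) (bw : borel_fun w).
Hypotheses (wM : exists M, forall x, w x <= M) (wiM : exists M, forall x, (w x)^-1 <= M).

Local Notation T := (Top alpha w).
Local Notation S := (Sop alphainv w).
Local Notation bp := (back_prod alphainv w).
Local Notation fp := (fwd_inv_prod alpha w).
Local Notation restrict h A := (fun x => h x * chi A x).

Lemma chi_in (A : set X) x : A x -> chi (R:=R) A x = 1.
Proof. by move=> Ax; rewrite /chi indicE mem_set. Qed.

Lemma chi_out (A : set X) x : ~ A x -> chi (R:=R) A x = 0.
Proof. by move=> nAx; rewrite /chi indicE memNset. Qed.

Lemma chi_setU (A B : set X) x :
  A `&` B = set0 -> chi (R:=R) A x + chi B x = chi (A `|` B) x.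
Proof.
move=> AB0; have [Ax|nAx] := pselect (A x).
  have nBx : ~ B x by move=> Bx; have : (A `&` B) x by []; rewrite AB0.
  by rewrite chi_in // (chi_out nBx) ?addr0 ?chi_in //; left.
rewrite (chi_out nAx) add0r; have [Bx|nBx] := pselect (B x).
  by rewrite !chi_in //; right.
by rewrite !chi_out // => -[].
Qed.

Lemma cabs_weighted_restrict_le (A K : set X) (p : X -> R) (h : X -> R[i]) (s M : R) y :
  A `<=` K -> 0 <= p y -> (A y -> p y <= s) -> cabs (h y) <= M -> 0 <= s -> 0 <= M ->
  cabs ((p y)%:C%C * (h y * chi A y)) <= s * M * cabs (chi (R:=R) K y).
Proof.
move=> AK p0 ps hM s0 M0; rewrite !cabsM cabs_real ger0_norm //.
have [Ay|nAy] := pselect (A y).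
  rewrite (chi_in Ay) (chi_in (AK _ Ay)) cabs1 !mulr1.
  by apply: ler_pM => //; [exact: cabs_ge0 | exact: ps].
by rewrite chi_out // cabs0 !mulr0 mulr_ge0 ?cabs_ge0 // mulr_ge0.
Qed.

Lemma iter_Top_restrict_estimate n h (A K : set X) (s M : R) :
  F (chi K) -> M0 h -> borel A -> A `<=` K -> (forall y, A y -> bp n y <= s) ->
  (forall y, cabs (h y) <= M) -> 0 <= s -> 0 <= M ->
  F (iter n T (restrict h A)) /\ nF (iter n T (restrict h A)) <= s * M * nF (chi K).
Proof.
move=> FK Mh bA AK As hM s0 M0.
have [FKn <-] := iter_alpha_invariance OM n FK.
apply: (solid_le BF OM FKn _ (mulr_ge0 s0 M0)) => [|x].
  by apply: M0_iter_Top => //; exact: M0_mul Mh (M0_chi R bA).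
rewrite (iter_Top w aK); apply: cabs_weighted_restrict_le => //.
  exact: back_prod_ge0.
exact: As.
Qed.

Lemma iter_Sop_restrict_estimate n h (A K : set X) (s M : R) :
  F (chi K) -> M0 h -> borel A -> A `<=` K -> (forall y, A y -> fp n y <= s) ->
  (forall y, cabs (h y) <= M) -> 0 <= s -> 0 <= M ->
  F (iter n S (restrict h A)) /\ nF (iter n S (restrict h A)) <= s * M * nF (chi K).
Proof.
move=> FK Mh bA AK As hM s0 M0.
have [FKn <-] := iter_alphainv_invariance OM n FK.
apply: (solid_le BF OM FKn _ (mulr_ge0 s0 M0)) => [|x].
  by apply: M0_iter_Sop => //; exact: M0_mul Mh (M0_chi R bA).
rewrite (iter_Sop w aiK); apply: cabs_weighted_restrict_le => //.
  exact: fwd_inv_prod_ge0.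
exact: As.
Qed.

Lemma restrict_sub_estimate h (E K : set X) (M : R) :
  F (chi (K `\` E)) -> M0 h -> borel E -> (forall x, h x != 0 -> K x) ->
  (forall x, cabs (h x) <= M) -> 0 <= M ->
  F (fun x => h x * chi E x - h x) /\
  nF (fun x => h x * chi E x - h x) <= M * nF (chi (K `\` E)).
Proof.
move=> FKE Mh bE hK hM M0.
apply: (solid_le BF OM FKE (M0_sub (M0_mul Mh (M0_chi R bE)) Mh) M0) => x.
have [Ex|nEx] := pselect (E x).
  by rewrite chi_in // mulr1 subrr cabs0 mulr_ge0 ?cabs_ge0.
rewrite chi_out // mulr0 sub0r cabsN.
have [->|hx0] := eqVneq (h x) 0; first by rewrite cabs0 mulr_ge0 ?cabs_ge0.
by rewrite chi_in ?cabs1 ?mulr1 //; split => //; exact: hK.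
Qed.

Variables (f g : X -> R[i]) (n : nat) (E D G : set X).

Definition perturbation (lam : R) : X -> R[i] := fun x =>
  f x * chi E x + 2 / (lam%:C)%C * (iter n T (restrict g D) x + iter n S (restrict g G) x).

Hypotheses (EDG : E = D `|` G) (DG0 : D `&` G = set0).

(* [T^n S^n = S^n T^n = id], and [chi D + chi G = chi E]. *)
Lemma Cn_perturbation (lam : R) : lam != 0 ->
  (fun x => (lam%:C)%C * Cn alpha alphainv w n (perturbation lam) x) =
  fun x => (lam%:C)%C / 2 * iter n T (restrict f E) x
    + (lam%:C)%C / 2 * iter n S (restrict f E) x
    + iter (2 * n) T (restrict g D) x + iter (2 * n) S (restrict g G) x
    + g x * chi E x.
Proof.
move=> lam0; apply/funext => x; rewrite /Cn /perturbation.
rewrite !(iter_TopD w aK) (iter_TopZ w aK) (iter_TopD w aK) (iter_SopK aK wpos).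
rewrite !(iter_SopD w aiK) (iter_SopZ w aiK) (iter_SopD w aiK) (iter_TopK aiK wpos).
rewrite mul2n -addnn !iterD EDG -chi_setU // mulrDr.
have lamC0 : (lam%:C)%C != 0 :> R[i] by rewrite eq_complex /= negb_and lam0.
by field.
Qed.

Variables (K : set X) (Mf Mg : R).
Hypotheses (bK : borel K) (FK : F (chi K)) (M0f : M0 f) (M0g : M0 g).
Hypotheses (fK : forall x, f x != 0 -> K x) (gK : forall x, g x != 0 -> K x).
Hypotheses (fM : forall x, cabs (f x) <= Mf) (gM : forall x, cabs (g x) <= Mg).
Hypotheses (Mf0 : 0 <= Mf) (Mg0 : 0 <= Mg).
Hypotheses (bE : borel E) (bD : borel D) (bG : borel G).
Hypotheses (EK : E `<=` K) (DK : D `<=` K) (GK : G `<=` K).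

Local Notation bp_le_supr := (back_prod_le_supr alphainv wpos wM).
Local Notation fp_le_supr := (fwd_inv_prod_le_supr alpha wpos wiM).
Local Notation supr_bp_ge0 := (supr_back_prod_ge0 alphainv wpos wM).
Local Notation supr_fp_ge0 := (supr_fwd_inv_prod_ge0 alpha wpos wiM).

Let FKE : F (chi (K `\` E)).
Proof. by apply: (F_chi_sub BF OM FK (borelD bK bE)) => x []. Qed.

Lemma perturbation_sub_estimate (lam : R) : 0 < lam ->
  F (fsub (perturbation lam) f) /\
  nF (fsub (perturbation lam) f) <= Mf * nF (chi (K `\` E))
    + 2 / lam * (supr D (bp n) + supr G (fp n)) * Mg * nF (chi K).
Proof.
move=> lam0; set c : R[i] := 2 / (lam%:C)%C.
have cabs_c : cabs c = 2 / lam by rewrite cabsM cabs2 cabsV cabs_real gtr0_norm.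
have -> : fsub (perturbation lam) f = fun x => (f x * chi E x - f x)
    + (c * iter n T (restrict g D) x + c * iter n S (restrict g G) x).
  by apply/funext => x; rewrite /fsub /perturbation -/c; ring.
have [Fu nu] := F_add_le BF (restrict_sub_estimate FKE M0f bE fK fM Mf0)
  (F_add_le BF
    (F_scale_le BF c (iter_Top_restrict_estimate FK M0g bD DK
       (bp_le_supr n (A:=D)) gM (supr_bp_ge0 n D) Mg0))
    (F_scale_le BF c (iter_Sop_restrict_estimate FK M0g bG GK
       (fp_le_supr n (A:=G)) gM (supr_fp_ge0 n G) Mg0))).
split => //; apply: le_trans nu _; rewrite cabs_c; lra.
Qed.

Lemma Cn_perturbation_sub_estimate (lam : R) : 0 < lam ->
  let v := fun x => (lam%:C)%C * Cn alpha alphainv w n (perturbation lam) x in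
  F (fsub v g) /\
  nF (fsub v g) <= lam / 2 * (supr E (bp n) + supr E (fp n)) * Mf * nF (chi K)
    + (supr D (bp (2 * n)) + supr G (fp (2 * n))) * Mg * nF (chi K)
    + Mg * nF (chi (K `\` E)).
Proof.
move=> lam0 v; set c : R[i] := (lam%:C)%C / 2.
have cabs_c : cabs c = lam / 2 by rewrite cabsM cabsV cabs2 cabs_real gtr0_norm.
have -> : fsub v g = fun x => c * iter n T (restrict f E) x + c * iter n S (restrict f E) x
    + iter (2 * n) T (restrict g D) x + iter (2 * n) S (restrict g G) x
    + (g x * chi E x - g x).
  have -> : v = _ := Cn_perturbation (lt0r_neq0 lam0).
  by apply/funext => x; rewrite /fsub -/c; ring.
have [Fv nv] := F_add_le BF (F_add_le BF (F_add_le BF (F_add_le BF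
  (F_scale_le BF c (iter_Top_restrict_estimate FK M0f bE EK
     (bp_le_supr n (A:=E)) fM (supr_bp_ge0 n E) Mf0))
  (F_scale_le BF c (iter_Sop_restrict_estimate FK M0f bE EK
     (fp_le_supr n (A:=E)) fM (supr_fp_ge0 n E) Mf0)))
  (iter_Top_restrict_estimate FK M0g bD DK
     (bp_le_supr (2 * n) (A:=D)) gM (supr_bp_ge0 (2 * n) D) Mg0))
  (iter_Sop_restrict_estimate FK M0g bG GK
     (fp_le_supr (2 * n) (A:=G)) gM (supr_fp_ge0 (2 * n) G) Mg0))
  (restrict_sub_estimate FKE M0g bE gK gM Mg0).
split => //; apply: le_trans nv _; rewrite cabs_c; lra.
Qed.

End Perturbation.

Lemma balanced_scale (R : realFieldType) (eta A B : R) :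
  0 < eta -> 0 <= A -> 0 <= B -> A * B <= eta ^+ 2 ->
  exists2 lam : R, 0 < lam & lam * A <= eta /\ B <= 2 * eta * lam.
Proof.
move=> eta0 A0 B0 AB; pose q := eta ^+ 2 / (B + eta).
have Beta0 : 0 < B + eta by rewrite ltr_wpDl.
have q0 : 0 < q by rewrite divr_gt0 // exprn_gt0.
have qB : q * B <= eta ^+ 2.
  by rewrite /q mulrAC ler_pdivrMr // ler_pM2l ?exprn_gt0 //; lra.
have Aq0 : 0 < A + q by rewrite ltr_wpDl.
exists (eta / (A + q)); first by rewrite divr_gt0.
split; first by rewrite mulrAC ler_pdivrMr // ler_pM2l //; lra.
rewrite mulrA ler_pdivlMr //; rewrite expr2 in AB qB; lra.
Qed.

Lemma increasing_nat_ge (u : nat -> nat) :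
  (forall k, (u k < u k.+1)%N) -> forall k, (k <= u k)%N.
Proof. by move=> incr; elim=> [|k IH] //; exact: leq_ltn_trans IH (incr k). Qed.

Lemma bounded_fun_nonneg (R : realType) (X : topologicalType) (f : X -> R[i]) :
  Defs.bounded_fun f -> exists2 M : R, 0 <= M & forall x, cabs (f x) <= M.
Proof.
move=> [M fM]; exists (Num.max M 0); first by rewrite le_max lexx orbT.
by move=> x; rewrite le_max fM.
Qed.

Section Approximation.
Variables (R : realType) (X : topologicalType) (alpha alphainv : X -> X) (w : X -> R).
Variables (F : set (X -> R[i])) (nF : (X -> R[i]) -> R).
Hypotheses (BF : BanachFunctionSpace F nF) (OM : condition_Omega F nF alpha alphainv).
Hypotheses (ca : continuous alpha) (cai : continuous alphainv).
Hypotheses (aK : cancel alpha alphainv) (aiK : cancel alphainv alpha).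
Hypotheses (wpos : forall x, 0 < w x) (bw : borel_fun w).
Hypotheses (wM : exists M, forall x, w x <= M) (wiM : exists M, forall x, (w x)^-1 <= M).

Local Notation bp := (back_prod alphainv w).
Local Notation fp := (fwd_inv_prod alpha w).
Local Notation Cn := (Cn alpha alphainv w).

Variables (K : set X) (f g : X -> R[i]) (Mf Mg : R).
Hypotheses (cK : compact K) (clK : closed K) (Ff : F f) (Fg : F g).
Hypotheses (fK : forall x, f x != 0 -> K x) (gK : forall x, g x != 0 -> K x).
Hypotheses (fM : forall x, cabs (f x) <= Mf) (gM : forall x, cabs (g x) <= Mg).
Hypotheses (Mf0 : 0 <= Mf) (Mg0 : 0 <= Mg).
Variables (nk : nat -> nat) (E D G : nat -> set X).
Hypotheses (nk_incr : forall k, (nk k < nk k.+1)%N)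
  (bEDG : forall k, [/\ borel (E k), borel (D k) & borel (G k)])
  (subK : forall k, [/\ E k `<=` K, D k `<=` K & G k `<=` K])
  (EDG : forall k, E k = D k `|` G k /\ D k `&` G k = set0).
Hypotheses (lim_chi : (fun k => nF (chi (K `\` E k))) @ \oo --> (0 : R))
  (lim_bpD : (fun k => supr (D k) (bp (2 * nk k))) @ \oo --> (0 : R))
  (lim_fpG : (fun k => supr (G k) (fp (2 * nk k))) @ \oo --> (0 : R))
  (lim_bpE_bpD : (fun k => supr (E k) (bp (nk k)) * supr (D k) (bp (nk k))) @ \oo --> (0 : R))
  (lim_bpE_fpG : (fun k => supr (E k) (bp (nk k)) * supr (G k) (fp (nk k))) @ \oo --> (0 : R))
  (lim_fpE_bpD : (fun k => supr (E k) (fp (nk k)) * supr (D k) (bp (nk k))) @ \oo --> (0 : R))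
  (lim_fpE_fpG : (fun k => supr (E k) (fp (nk k)) * supr (G k) (fp (nk k))) @ \oo --> (0 : R)).

(* The last product expands into the four quantities (iv)-(vii). *)
Lemma splitting_eventually_small (eta : R) : 0 < eta -> \forall k \near \oo,
  [/\ (0 < nk k)%N, nF (chi (K `\` E k)) < eta,
      supr (D k) (bp (2 * nk k)) + supr (G k) (fp (2 * nk k)) < 2 * eta &
      (supr (E k) (bp (nk k)) + supr (E k) (fp (nk k))) *
      (supr (D k) (bp (nk k)) + supr (G k) (fp (nk k))) < eta ^+ 2].
Proof.
move=> eta0; have eta4 : 0 < eta ^+ 2 / 4 by rewrite divr_gt0 // exprn_gt0.
have small u : u @ \oo --> (0 : R) -> forall e, 0 < e -> \forall k \near \oo, u k < e.
  move=> u0 e e0; near=> k; apply: le_lt_trans (ler_norm _) _.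
  by near: k; exact: (cvgr0Pnorm_lt _).1 u0 _ e0.
near=> k; split.
- apply: leq_trans (increasing_nat_ge nk_incr k); near: k; by exists 1%N.
- by near: k; exact: small.
- have hD : supr (D k) (bp (2 * nk k)) < eta by near: k; exact: small.
  have hG : supr (G k) (fp (2 * nk k)) < eta by near: k; exact: small.
  lra.
have h1 : supr (E k) (bp (nk k)) * supr (D k) (bp (nk k)) < eta ^+ 2 / 4.
  by near: k; exact: small.
have h2 : supr (E k) (bp (nk k)) * supr (G k) (fp (nk k)) < eta ^+ 2 / 4.
  by near: k; exact: small.
have h3 : supr (E k) (fp (nk k)) * supr (D k) (bp (nk k)) < eta ^+ 2 / 4.
  by near: k; exact: small.
have h4 : supr (E k) (fp (nk k)) * supr (G k) (fp (nk k)) < eta ^+ 2 / 4.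
  by near: k; exact: small.
rewrite mulrDl !mulrDr; lra.
Unshelve. all: end_near.
Qed.

Let Z := 1 + Mf + Mg + 4 * (Mf + Mg) * nF (chi K).

Let Z_gt0 : 0 < Z.
Proof.
have cK0 : 0 <= nF (chi K) := bfs_norm_ge0 BF (om_chi_compact OM cK).
by rewrite /Z ltr_wpDr ?mulr_ge0 ?addr_ge0 // ltr_wpDr // ltr_wpDr.
Qed.

Lemma perturbation_approximates_scaled (eta : R) : 0 < eta ->
  exists n (lam : R) u, [/\ (0 < n)%N, 0 < lam, F u /\ nF (fsub u f) <= eta * Z &
    F (fun x => (lam%:C)%C * Cn n u x) /\
    nF (fsub (fun x => (lam%:C)%C * Cn n u x) g) <= eta * Z].
Proof.
move=> eta0; have FK : F (chi K) := om_chi_compact OM cK.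
have cK0 : 0 <= nF (chi K) := bfs_norm_ge0 BF FK.
have [N _ /(_ N (leqnn N)) [n0 small_chi small_2n small_n]] :=
  splitting_eventually_small eta0.
move: small_2n small_n.
have [bE bD bG] := bEDG N; have [EK DK GK] := subK N; have [EDGN DG0] := EDG N.
set n := nk N in n0 *; set sE := supr _ (bp n); set tE := supr _ (fp n).
set sD := supr _ (bp n); set tG := supr _ (fp n); move=> small_2n small_n.
have A0 : 0 <= sE + tE by rewrite addr_ge0 ?supr_back_prod_ge0 ?supr_fwd_inv_prod_ge0.
have B0 : 0 <= sD + tG by rewrite addr_ge0 ?supr_back_prod_ge0 ?supr_fwd_inv_prod_ge0.
have [lam lam0 [lamA lamB]] := balanced_scale eta0 A0 B0 (ltW small_n).
have [M0f M0g] := (bfs_M0 BF Ff, bfs_M0 BF Fg).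
have [Fuf nuf] := perturbation_sub_estimate BF OM ca cai aK aiK wpos bw wM wiM n
  (borel_closed clK) FK M0f M0g fK fM gM Mf0 Mg0 bE bD bG DK GK lam0.
have [Fvg nvg] := Cn_perturbation_sub_estimate BF OM ca cai aK aiK wpos bw wM wiM n
  EDGN DG0 (borel_closed clK) FK M0f M0g gK fM gM Mf0 Mg0 bE bD bG EK DK GK lam0.
have eMf : 0 <= eta * Mf by rewrite mulr_ge0 // ltW.
have eMg : 0 <= eta * Mg by rewrite mulr_ge0 // ltW.
have eMfcK : 0 <= eta * Mf * nF (chi K) by rewrite !mulr_ge0 // ltW.
have eMgcK : 0 <= eta * Mg * nF (chi K) by rewrite !mulr_ge0 // ltW.
exists n, lam, (perturbation alpha alphainv w f g n (E N) (D N) (G N) lam); split => //.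
  split; first exact: (F_from_fsub BF Ff Fuf).
  apply: le_trans nuf _; rewrite -/sD -/tG.
  have h2B : 2 / lam * (sD + tG) <= 4 * eta by rewrite mulrAC ler_pdivrMr //; lra.
  have := ler_wpM2r cK0 (ler_wpM2r Mg0 h2B).
  have := ler_wpM2l Mf0 (ltW small_chi).
  rewrite /Z; lra.
split; first exact: (F_from_fsub BF Fg Fvg).
apply: le_trans nvg _; rewrite -/sE -/tE -/sD -/tG.
have hA : lam / 2 * (sE + tE) <= eta / 2 by rewrite mulrAC ler_pM2r ?invr_gt0.
have := ler_wpM2r cK0 (ler_wpM2r Mf0 hA).
have := ler_wpM2r cK0 (ler_wpM2r Mg0 (ltW small_2n)).
have := ler_wpM2l Mg0 (ltW small_chi).
rewrite /Z; lra.
Qed.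

Lemma perturbation_approximates (eps : R) : 0 < eps ->
  exists n (lam : R) u, [/\ (0 < n)%N, 0 < lam, F u /\ nF (fsub u f) < eps &
    F (fun x => (lam%:C)%C * Cn n u x) /\
    nF (fsub (fun x => (lam%:C)%C * Cn n u x) g) < eps].
Proof.
move=> eps0; have eta0 : 0 < eps / (2 * Z) by rewrite divr_gt0 ?mulr_gt0.
have etaZ : eps / (2 * Z) * Z < eps.
  have -> : eps / (2 * Z) * Z = eps / 2 by field; exact: lt0r_neq0.
  lra.
have [n [lam [u [n0 lam0 [Fu nu] [Fv nv]]]]] := perturbation_approximates_scaled eta0.
by exists n, lam, u; split => //; split => //; exact: le_lt_trans etaZ.
Qed.

End Approximation.

Unset Implicit Arguments.
Set Strict Implicit.

Theorem theorem5p5 (R : realType) (X : topologicalType)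
  (alpha alphainv : X -> X) (F : set (X -> R[i])) (nF : (X -> R[i]) -> R)
  (w : X -> R) :
  homeomorphism alpha alphainv ->
  BanachFunctionSpace F nF ->
  condition_Omega F nF alpha alphainv ->
  (forall x, 0 < w x) -> borel_fun w ->
  (exists M : R, forall x, w x <= M) ->
  (exists M : R, forall x, (w x)^-1 <= M) ->
  (forall K : set X, compact K ->
    exists (nk : nat -> nat) (E D G : nat -> set X),
      [/\ (forall k, (nk k < nk k.+1)%N),
          (forall k, [/\ borel (E k), borel (D k) & borel (G k)]),
          (forall k, [/\ E k `<=` K, D k `<=` K & G k `<=` K]),
          (forall k, E k = D k `|` G k /\ D k `&` G k = set0) &
          [/\ (fun k => nF (chi (K `\` E k))) @ \oo --> (0 : R),
              (fun k => supr (D k) (back_prod alphainv w (2 * nk k))) @ \oo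
                --> (0 : R),
              (fun k => supr (G k) (fwd_inv_prod alpha w (2 * nk k))) @ \oo
                --> (0 : R) &
            [/\ (fun k => supr (E k) (back_prod alphainv w (nk k)) *
                        supr (D k) (back_prod alphainv w (nk k))) @ \oo
                --> (0 : R),
              (fun k => supr (E k) (back_prod alphainv w (nk k)) *
                        supr (G k) (fwd_inv_prod alpha w (nk k))) @ \oo
                --> (0 : R),
              (fun k => supr (E k) (fwd_inv_prod alpha w (nk k)) *
                        supr (D k) (back_prod alphainv w (nk k))) @ \oo
                --> (0 : R) &
              (fun k => supr (E k) (fwd_inv_prod alpha w (nk k)) *
                        supr (G k) (fwd_inv_prod alpha w (nk k))) @ \oo
                --> (0 : R)]]]) ->
  transitive_positive_supercyclic F nF (Cn alpha alphainv w).
Proof.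
move=> [ca cai aK aiK] BF OM wpos bw wM wiM splitting O1 O2 oO1 oO2 O1n0 O2n0.
have [f [e1 [Ff fbd fcs e10 f_O1]]] := openF_approx BF OM oO1 O1n0.
have [g [e2 [Fg gbd gcs e20 g_O2]]] := openF_approx BF OM oO2 O2n0.
have [Mf Mf0 fM] := bounded_fun_nonneg fbd.
have [Mg Mg0 gM] := bounded_fun_nonneg gbd.
pose K := closure [set x | f x != 0] `|` closure [set x | g x != 0].
have cK : compact K := compactU fcs gcs.
have clK : closed K := closedU (@closed_closure _ _) (@closed_closure _ _).
have fK x : f x != 0 -> K x by move=> fx; left; exact: subset_closure.
have gK x : g x != 0 -> K x by move=> gx; right; exact: subset_closure.
have [nk [E [D [G [nk_incr bEDG subK EDG [l1 l2 l3 [l4 l5 l6 l7]]]]]]] := splitting K cK.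
have e0 : 0 < Num.min e1 e2 by rewrite lt_min e10 e20.
have [n [lam [u [n0 lam0 [Fu uf] [Fv vg]]]]] :=
  perturbation_approximates BF OM ca cai aK aiK wpos bw wM wiM cK clK Ff Fg fK gK fM gM
    Mf0 Mg0 nk_incr bEDG subK EDG l1 l2 l3 l4 l5 l6 l7 e0.
exists n, lam; split => //; exists u; split.
  by apply: f_O1 => //; apply: lt_le_trans uf _; rewrite ge_min lexx.
by apply: g_O2 => //; apply: lt_le_trans vg _; rewrite ge_min lexx orbT.
Qed.
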